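(* For every $t\in\mathbb{N}$ there exists $n_0(t)$ such that for all $n\ge n_0(t)$ the following holds. Let $\mathcal{F}\subseteq\mathcal{M}_{2n}$ be a $t$-intersecting family. For any distinct vertices $i,j,k$ of $K_{2n}$, \[|\mathcal{F}\!\downarrow_{ij}|\cdot|\mathcal{F}\!\downarrow_{ik}|\le\big((2(n-t-1)-1)!!\big)^2.\]
   Context: $\mathcal{M}_{2n}$ is the set of perfect matchings of $K_{2n}$. A family $\mathcal{F}$ is $t$-intersecting if $|m\cap m'|\ge t$ for all $m,m'\in\mathcal{F}$. For an edge $ij$, $\mathcal{F}\!\downarrow_{ij}=\{m\in\mathcal{F}: \{i,j\}\in m\}$. $(2k-1)!!=1\cdot3\cdots(2k-1)$. *)

From mathcomp Require Import all_boot.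
Set Implicit Arguments. Unset Strict Implicit. Unset Printing Implicit Defensive.

Definition is_edge (N : nat) (e : {set 'I_N}) : bool := #|e| == 2.

Definition perfect_matching (N : nat) (m : {set {set 'I_N}}) : bool :=
  [forall e in m, is_edge e] &&
  [forall v : 'I_N, #|[set e in m | v \in e]| == 1].

Definition t_intersecting (N t : nat) (F : {set {set {set 'I_N}}}) : bool :=
  [forall m in F, forall m' in F, t <= #|m :&: m'|].

Definition restrict_edge (N : nat) (F : {set {set {set 'I_N}}}) (i j : 'I_N)
  : {set {set {set 'I_N}}} := [set m in F | [set i; j] \in m].

(* odd_dfact k = (2k-1)!! = 1 * 3 * ... * (2k-1), with (-1)!! = 1 *)
Definition odd_dfact (k : nat) : nat := \prod_(i < k) (2 * i + 1).

(* Spread approximation.  For A = F|ij and B = F|ik, call a set S of fewer than L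
   edges a kernel of A if some nonempty subfamily of A whose members all contain S
   is R-spread outside S: no other edge lies in more than a 1/R fraction of it.
   Choosing S to maximise #{a in A : S <= a} * R^|S| shows that all but
   (2(n-L-1)-1)!! R^L members of A contain a kernel.  Spreadness forces every kernel
   of A to share t edges with every kernel of B, so the members of A containing a
   kernel can be counted through t-subsets of a fixed kernel of B, or through a t-set
   lying in all kernels when there is one; in every case, combined with the
   symmetric bound for B, the product is at most ((2(n-t-1)-1)!!)^2 as soon as
   L ~ 4t log n makes the remainder negligible. *)

From mathcomp Require Import all_boot zify.
Set Implicit Arguments. Unset Strict Implicit. Unset Printing Implicit Defensive.

Lemma card_le_sum_cover (T I : finType) (X : {set T}) (J : {set I}) (G : I -> {set T}) :
  (forall x, x \in X -> exists2 i, i \in J & x \in G i) -> #|X| <= \sum_(i in J) #|G i|.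
Proof.
move=> XG; apply: leq_trans (_ : #|\bigcup_(i in J) G i| <= _).
  by apply/subset_leq_card/subsetP => x /XG [i iJ xGi]; apply/bigcupP; exists i.
elim/big_ind2: _ => [|U1 s1 U2 s2 le1 le2|//]; first by rewrite cards0.
exact: leq_trans (leq_card_setU _ _) (leq_add le1 le2).
Qed.

Lemma card_le_cover (T I : finType) (X : {set T}) (J : {set I}) (G : I -> {set T}) c :
  (forall x, x \in X -> exists2 i, i \in J & x \in G i) ->
  (forall i, i \in J -> #|G i| <= c) -> #|X| <= #|J| * c.
Proof.
move=> XG Gc; rewrite -sum_nat_const.
by apply: leq_trans (card_le_sum_cover XG) _; apply: leq_sum.
Qed.

Lemma subset_of_card (T : finType) (S : {set T}) k :
  k <= #|S| -> exists2 U : {set T}, U \subset S & #|U| = k.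
Proof.
elim: k => [|k IHk] le_kS; first by exists set0; rewrite ?sub0set ?cards0.
have [U US cardU] := IHk (ltnW le_kS).
have /properP [_ [x xS xU]] : U \proper S by rewrite properEcard US cardU.
by exists (x |: U); rewrite ?subUset ?sub1set ?xS ?US // cardsU1 xU cardU.
Qed.

Lemma exists_notin_of_card (T : finType) (S W : {set T}) :
  #|S| <= #|W| -> ~~ (S \subset W) -> exists2 e, e \in W & e \notin S.
Proof.
move=> le_SW nSW; have [WS | /subsetPn [e eW eS]] := boolP (W \subset S); last by exists e.
have /eqP eqWS : W == S by rewrite eqEcard WS.
by rewrite eqWS subxx in nSW.
Qed.

Lemma leq_expn2r m1 m2 e : m1 <= m2 -> m1 ^ e <= m2 ^ e.
Proof. by move=> le_m; elim: e => // e IHe; rewrite !expnS leq_mul. Qed.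

Lemma leq_bin_exp m k : 'C(m, k) <= m ^ k.
Proof.
apply: leq_trans (_ : 'C(m, k) * k`! <= _); first by rewrite leq_pmulr ?fact_gt0.
rewrite bin_ffact ffact_prod.
apply: leq_trans (leq_prod (fun (i : 'I_k) _ => leq_subr i m)) _.
by rewrite prod_nat_const card_ord.
Qed.

Lemma odd_dfactS k : odd_dfact k.+1 = odd_dfact k * (2 * k + 1).
Proof. by rewrite /odd_dfact big_ord_recr. Qed.

Lemma odd_dfact_addn k m : (2 * k + 1) ^ m * odd_dfact k <= odd_dfact (k + m).
Proof.
elim: m => [|m IHm]; first by rewrite mul1n addn0.
rewrite (addnS k m) odd_dfactS expnS -mulnA mulnC.
apply: leq_mul IHm _; lia.
Qed.

Section PerfectMatchings.
Variable n : nat.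
Local Notation V := 'I_(2 * n).
Local Notation M := {set {set V}}.
Implicit Types (m W : M) (e : {set V}) (v : V).

Lemma pm_card_edge m e : perfect_matching m -> e \in m -> #|e| = 2.
Proof. by case/andP => /forall_inP edges _ /edges /eqP. Qed.

Lemma pm_edge_uniq m e1 e2 v : perfect_matching m -> e1 \in m -> e2 \in m ->
  v \in e1 -> v \in e2 -> e1 = e2.
Proof.
case/andP => _ /forallP /(_ v) /cards1P [x ex] e1m e2m ve1 ve2.
have : e1 \in [set e in m | v \in e] by rewrite inE e1m.
have : e2 \in [set e in m | v \in e] by rewrite inE e2m.
by rewrite ex !inE => /eqP -> /eqP ->.
Qed.

Lemma pm_partner m v : perfect_matching m -> exists2 u, u != v & [set v; u] \in m.
Proof.
case/andP => /forall_inP edges /forallP /(_ v) /cards1P [e ev].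
have : e \in [set e in m | v \in e] by rewrite ev set11.
rewrite inE => /andP [em ve]; have /cards2P [x [y [xy exy]]] := edges e em.
move: ve em; rewrite exy !inE => /orP [] /eqP ->; first by exists y; rewrite 1?eq_sym.
by rewrite setUC; exists x.
Qed.

Lemma pm_adjacent_edge m i j k : perfect_matching m -> i != k -> j != k ->
  [set i; j] \in m -> [set i; k] \notin m.
Proof.
move=> pm ik jk ijm; apply/negP => ikm.
have : k \in [set i; j].
  by rewrite (pm_edge_uniq pm ijm ikm (set21 i j) (set21 i k)) !inE eqxx orbT.
by rewrite !inE eq_sym (negbTE ik) eq_sym (negbTE jk).
Qed.

Lemma pm_card_cover m W : perfect_matching m -> W \subset m -> #|cover W| = 2 * #|W|.
Proof.
move=> pm Wm.
have triv_m : trivIset m.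
  apply/trivIsetP => e1 e2 e1m e2m; apply: contraR => /pred0Pn [v /andP [ve1 ve2]].
  by rewrite (pm_edge_uniq pm e1m e2m ve1 ve2).
rewrite -(eqP (trivIsetS Wm triv_m)) (mulnC 2 #|W|) -sum_nat_const.
by apply: eq_bigr => e eW; apply: pm_card_edge pm (subsetP Wm e eW).
Qed.

Lemma pm_card m : perfect_matching m -> #|m| = n.
Proof.
move=> pm; have := pm_card_cover pm (subxx m).
have -> : cover m = setT.
  apply/setP => v; rewrite inE; have [u _ vum] := pm_partner v pm.
  by apply/bigcupP; exists [set v; u]; rewrite ?set21.
rewrite cardsT card_ord; lia.
Qed.

Lemma card_pm_containing W :
  #|[set m | perfect_matching m & W \subset m]| <= odd_dfact (n - #|W|).
Proof.
move defk: (n - #|W|) => k; elim: k W defk => [|k IHk] W defk.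
  apply: (@leq_trans #|[set W]|); last by rewrite cards1 /odd_dfact big_ord0.
  apply/subset_leq_card/subsetP => m; rewrite !inE => /andP [pm Wm].
  by rewrite eq_sym eqEcard Wm (pm_card pm) -subn_eq0 defk.
set ext := [set m | _ & _]; have [-> | [m0]] := set_0Vmem ext; first by rewrite cards0.
rewrite inE => /andP [pm0 Wm0].
have cardC : #|~: cover W| = (2 * k + 1).+1.
  by rewrite cardsCs setCK card_ord (pm_card_cover pm0 Wm0); lia.
have /card_gt0P [v] : 0 < #|~: cover W| by rewrite cardC.
rewrite inE => vW; set U := ~: cover W :\ v.
have cardU : #|U| = 2 * k + 1.
  by have := cardsD1 v (~: cover W); rewrite in_setC vW cardC add1n -/U => -[].
(* Split the matchings according to the partner u of the uncovered vertex v. *)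
rewrite odd_dfactS (mulnC (odd_dfact k)) -cardU.
apply: (card_le_cover (G := fun u => [set m | perfect_matching m & [set v; u] |: W \subset m])).
  move=> m; rewrite inE => /andP [pm Wm]; have [u uv vum] := pm_partner v pm.
  exists u; last by rewrite inE pm subUset sub1set vum Wm.
  rewrite !inE uv /=; apply: contra vW => /bigcupP [e eW ue].
  have eE := pm_edge_uniq pm (subsetP Wm e eW) vum ue (set22 v u).
  by apply/bigcupP; exists e; rewrite // eE set21.
move=> u _; apply: IHk; rewrite cardsU1.
have -> : [set v; u] \notin W.
  by apply: contra vW => vuW; apply/bigcupP; exists [set v; u]; rewrite ?set21.
lia.
Qed.

End PerfectMatchings.

Section Kernels.
Variable n : nat.
Local Notation V := 'I_(2 * n).
Local Notation E := {set V}.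
Local Notation M := {set E}.
Local Notation Fam := {set M}.

Definition pinned (A : Fam) (b c : E) : Prop :=
  forall a, a \in A -> [/\ perfect_matching a, b \in a & c \notin a].

Definition cross_intersecting (t : nat) (A B : Fam) : Prop :=
  forall a x, a \in A -> x \in B -> t <= #|a :&: x|.

Definition pinned_pair (t : nat) (A B : Fam) (b c : E) : Prop :=
  [/\ pinned A b c, pinned B c b & cross_intersecting t A B].

Lemma pinned_pair_sym t A B b c : pinned_pair t A B b c -> pinned_pair t B A c b.
Proof. by case=> pinA pinB crossAB; split=> // x a xB aA; rewrite setIC crossAB. Qed.

Lemma restrict_edge_pinned_pair t (F : Fam) (i j k : V) :
  (forall m, m \in F -> perfect_matching m) -> t_intersecting t F ->
  i != j -> i != k -> j != k ->
  pinned_pair t (restrict_edge F i j) (restrict_edge F i k) [set i; j] [set i; k].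
Proof.
move=> pmF tF ij ik jk; split.
- move=> a; rewrite inE => /andP [aF ija]; have pma := pmF a aF.
  by split=> //; apply: pm_adjacent_edge pma ik jk ija.
- move=> x; rewrite inE => /andP [xF ikx]; have pmx := pmF x xF.
  by split=> //; apply: pm_adjacent_edge pmx ij _ ikx; rewrite eq_sym.
move=> a x; rewrite !inE => /andP [aF _] /andP [xF _].
by move/forall_inP/(_ a aF)/forall_inP: tF; apply.
Qed.

(* [b] lies in every member of the families considered, hence is exempt. *)
Definition spread (R : nat) (P : Fam) (S : M) (b : E) : bool :=
  [forall e, (e \notin S) ==> (e != b) ==> (#|[set p in P | e \in p]| * R <= #|P|)].

Definition kernels (L R : nat) (A : Fam) (b : E) : {set M} :=
  [set S : M | [&& #|S| < L, b \notin S & [exists P : Fam,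
     [&& P \subset A, P != set0, [forall p in P, S \subset p] & spread R P S b]]]].

Definition kernel_covered (L R : nat) (A : Fam) (b : E) : Fam :=
  [set a in A | [exists S in kernels L R A b, S \subset a]].

Definition core (t : nat) (K : {set M}) (T : M) : bool :=
  [&& #|T| == t, K != set0 & [forall S in K, T \subset S]].

Lemma not_core t (K : {set M}) (T S0 : M) : #|T| = t -> S0 \in K -> ~~ core t K T ->
  exists2 S, S \in K & ~~ (T \subset S).
Proof.
move=> cT S0K; have K0 : K != set0 by apply/set0Pn; exists S0.
by rewrite /core cT eqxx K0 /= => /forall_inPn [S SK TS]; exists S.
Qed.

Lemma spread_avoid R P S b (G : {set E}) :
  P != set0 -> spread R P S b -> [disjoint G & S] -> b \notin G -> #|G| < R ->
  exists2 p, p \in P & [disjoint G & p].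
Proof.
move=> P0 spreadP GS bG ltGR.
have [/exists_inP [p pP Gp] | /exists_inPn meetG] := boolP [exists p in P, [disjoint G & p]].
  by exists p.
suff : #|P| * R <= #|G| * #|P| by rewrite mulnC leq_pmul2r ?card_gt0 // leqNgt ltGR.
have coverP : #|P| <= \sum_(e in G) #|[set p in P | e \in p]|.
  apply: card_le_sum_cover => p pP; have /pred0Pn [e /andP [eG ep]] := meetG p pP.
  by exists e; rewrite // inE pP.
apply: leq_trans (leq_mul coverP (leqnn R)) _.
rewrite big_distrl -[#|G| * _]sum_nat_const /=; apply: leq_sum => e eG.
have eS : e \notin S by rewrite (disjointFr GS eG).
have eb : e != b by apply: contraNneq bG => <-.
by have /forallP /(_ e) := spreadP; rewrite eS eb.
Qed.

Section OneFamily.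
Variables (L R : nat) (A : Fam) (b c : E).
Hypothesis pinA : pinned A b c.
Local Notation K := (kernels L R A b).

Lemma kernelP S : S \in K -> [/\ #|S| < L, b \notin S & c \notin S].
Proof.
rewrite inE => /and3P [SL bS /existsP [P /and4P [PA /set0Pn [p pP] /forall_inP PS _]]].
have [_ _ cp] := pinA (subsetP PA p pP).
by split=> //; apply: contraNN cp; apply: (subsetP (PS p pP) c).
Qed.

Lemma kernel_coveredP a :
  a \in kernel_covered L R A b -> a \in A /\ exists2 S, S \in K & S \subset a.
Proof. by rewrite inE => /andP [aA /exists_inP [S SK Sa]]; split=> //; exists S. Qed.

Lemma core_kernelsP t T :
  core t K T -> [/\ #|T| = t, b \notin T & forall S, S \in K -> T \subset S].
Proof.
case/and3P => /eqP cT /set0Pn [S0 S0K] /forall_inP TK; split=> //.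
by have [_ bS0 _] := kernelP S0K; apply: contraNN bS0; apply: (subsetP (TK S0 S0K) b).
Qed.

Lemma card_containing (X : Fam) (W : M) : X \subset A -> b \notin W ->
  (forall x, x \in X -> W \subset x) -> #|X| <= odd_dfact (n - #|W|.+1).
Proof.
move=> XA bW XW; have := card_pm_containing (b |: W).
rewrite cardsU1 bW add1n; apply: leq_trans; apply/subset_leq_card/subsetP => x xX.
by have [pm bx _] := pinA (subsetP XA x xX); rewrite inE pm subUset sub1set bx XW.
Qed.

Lemma card_meeting (X : Fam) (Z : M) t : X \subset A -> b \notin Z ->
  (forall x, x \in X -> t <= #|x :&: Z|) -> #|X| <= 'C(#|Z|, t) * odd_dfact (n - t.+1).
Proof.
move=> XA bZ XZ; rewrite -cards_draws.
apply: (card_le_cover (G := fun T : M => [set x in X | T \subset x])).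
  move=> x xX; have [T TxZ cT] := subset_of_card (XZ x xX).
  have TZ : T \subset Z := subset_trans TxZ (subsetIr _ _).
  have Tx : T \subset x := subset_trans TxZ (subsetIl _ _).
  by exists T; rewrite !inE ?TZ ?Tx ?xX ?cT ?eqxx.
move=> T; rewrite inE => /andP [TZ /eqP <-].
apply: card_containing; first by rewrite setIdE (subset_trans (subsetIl _ _) XA).
  by apply: contraNN bZ; apply: (subsetP TZ b).
by move=> x; rewrite inE => /andP [].
Qed.

Lemma card_extending (X : Fam) (T Z : M) t : X \subset A -> #|T| = t ->
  b \notin T -> b \notin Z -> ~~ (T \subset Z) ->
  (forall x, x \in X -> T \subset x /\ t <= #|x :&: Z|) -> #|X| <= #|Z| * odd_dfact (n - t.+2).
Proof.
move=> XA cT bT bZ TZ XTZ.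
apply: leq_trans (_ : #|Z :\: T| * odd_dfact (n - t.+2) <= _); last first.
  by rewrite leq_mul2r subset_leq_card ?subsetDl ?orbT.
apply: (card_le_cover (G := fun e : E => [set x in X | e |: T \subset x])).
  move=> x xX; have [Tx le_t] := XTZ x xX.
  have le_T : #|T| <= #|x :&: Z| by rewrite cT.
  have nTxZ : ~~ (T \subset x :&: Z).
    by apply: contra TZ => /subset_trans; apply; apply: subsetIr.
  have [e] := exists_notin_of_card le_T nTxZ; rewrite inE => /andP [ex eZ] eT.
  by exists e; rewrite !inE ?eT ?eZ ?xX // subUset sub1set ex Tx.
move=> e; rewrite in_setD => /andP [eT eZ].
have -> : t.+2 = #|e |: T|.+1 by rewrite cardsU1 eT cT.
apply: card_containing; first by rewrite setIdE (subset_trans (subsetIl _ _) XA).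
  by rewrite in_setU1 negb_or bT andbT; apply: contraNneq bZ => ->.
by move=> x; rewrite inE => /andP [].
Qed.

Lemma card_not_covered : 0 < R ->
  #|A :\: kernel_covered L R A b| <= odd_dfact (n - L.+1) * R ^ L.
Proof.
(* A maximiser S of w with |S| < L is a kernel, witnessed by Y_ S itself. *)
move=> R_gt0; set Y := A :\: _.
pose Y_ (S : M) := [set y in Y | S \subset y].
have Y_A S : Y_ S \subset A by rewrite /Y_ setIdE (subset_trans (subsetIl _ _)) ?subsetDl.
pose w (S : M) := #|Y_ S| * R ^ #|S|.
pose D (S : M) := (#|S| <= L) && (b \notin S).
have D0 : D set0 by rewrite /D cards0 in_set0.
have [S /andP [SL bS] Smax] := arg_maxnP w D0.
have le_Yw : #|Y| <= w S.
  apply: leq_trans (Smax _ D0); rewrite /w cards0 muln1 subset_leq_card //.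
  by apply/subsetP => y yY; rewrite inE yY sub0set.
apply: leq_trans le_Yw _; have [ltSL | geSL] := ltnP #|S| L; last first.
  have eqSL : #|S| = L by apply/eqP; rewrite eqn_leq SL geSL.
  rewrite /w eqSL leq_mul2r -[in X in _ <= X]eqSL card_containing ?orbT //.
  by move=> y; rewrite inE => /andP [].
have [YS0 | YS0] := eqVneq (Y_ S) set0; first by rewrite /w YS0 cards0.
have spreadYS : spread R (Y_ S) S b.
  apply/forallP => e; apply/implyP => eS; apply/implyP => eb.
  have De : D (e |: S).
    by rewrite /D cardsU1 eS in_setU1 negb_or eq_sym eb bS add1n ltSL.
  have -> : [set p in Y_ S | e \in p] = Y_ (e |: S).
    by apply/setP => y; rewrite !inE subUset sub1set -andbA [(S \subset y) && _]andbC.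
  by have := Smax _ De; rewrite /w /= cardsU1 eS add1n expnS mulnA leq_pmul2r ?expn_gt0 ?R_gt0.
have SK : S \in kernels L R A b.
  rewrite inE ltSL bS; apply/existsP; exists (Y_ S); rewrite Y_A YS0 spreadYS andbT /=.
  by apply/forall_inP => y; rewrite inE => /andP [].
have /set0Pn [y] := YS0.
rewrite !inE => /andP [/andP [yC yA] Sy]; case/negP: yC.
by rewrite yA; apply/exists_inP; exists S.
Qed.

Lemma card_le_covered : 0 < R ->
  #|A| <= #|kernel_covered L R A b| + odd_dfact (n - L.+1) * R ^ L.
Proof.
move=> R_gt0; rewrite -(cardsID (kernel_covered L R A b) A) leq_add ?card_not_covered //.
by rewrite subset_leq_card ?subsetIr.
Qed.

Lemma card_le_no_kernel : 0 < R -> K = set0 -> #|A| <= odd_dfact (n - L.+1) * R ^ L.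
Proof.
move=> R_gt0 K0; apply: leq_trans (card_le_covered R_gt0) _.
suff -> : kernel_covered L R A b = set0 by rewrite cards0.
by apply/setP => a; rewrite !inE K0; apply/negbTE/negP => /andP [_ /exists_inP [S]]; rewrite inE.
Qed.

End OneFamily.

Section TwoFamilies.
Variables (t L R : nat) (A B : Fam) (b c : E).
Hypothesis hAB : pinned_pair t A B b c.
Hypotheses (ltnR : n < R) (ltLR : L < R).
Local Notation KA := (kernels L R A b).
Local Notation KB := (kernels L R B c).
Local Notation covA := (kernel_covered L R A b).
Local Notation rho := (odd_dfact (n - L.+1) * R ^ L).

Let pinA : pinned A b c. Proof. by case: hAB. Qed.
Let pinB : pinned B c b. Proof. by case: hAB. Qed.
Let crossAB : cross_intersecting t A B. Proof. by case: hAB. Qed.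
Let R_gt0 : 0 < R. Proof. exact: leq_ltn_trans ltnR. Qed.
Let covA_sub : covA \subset A. Proof. by rewrite /kernel_covered setIdE subsetIl. Qed.

Lemma kernels_cross (S S' : M) : S \in KA -> S' \in KB -> t <= #|S :&: S'|.
Proof.
(* Spreadness of Q yields q avoiding S :\: S'; spreadness of P then yields p
   avoiding q :\: S, so that p :&: q lies in S :&: S'. *)
move=> SK S'K; have [ltSL _ cS] := kernelP pinA SK.
move: SK S'K; rewrite !inE => /and3P [_ _ /existsP [P /and4P [PA P0 /forall_inP PS spreadP]]].
move=> /and3P [_ _ /existsP [Q /and4P [QB Q0 /forall_inP QS spreadQ]]].
have [q qQ dq] : exists2 q, q \in Q & [disjoint S :\: S' & q].
  apply: spread_avoid Q0 spreadQ _ _ _; first by have /subsetDP [] := subxx (S :\: S').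
    by rewrite in_setD negb_and cS orbT.
  exact: leq_ltn_trans (subset_leq_card (subsetDl _ _)) (ltn_trans ltSL ltLR).
have [_ _ bq] := pinB (subsetP QB q qQ).
have [p pP dp] : exists2 p, p \in P & [disjoint q :\: S & p].
  apply: spread_avoid P0 spreadP _ _ _; first by have /subsetDP [] := subxx (q :\: S).
    by rewrite in_setD negb_and bq orbT.
  apply: leq_ltn_trans (subset_leq_card (subsetDl _ _)) _.
  by have [pmq _ _] := pinB (subsetP QB q qQ); rewrite (pm_card pmq).
apply: leq_trans (crossAB (subsetP PA p pP) (subsetP QB q qQ)) _.
apply/subset_leq_card/subsetP => e; rewrite !inE => /andP [ep eq].
have eS : e \in S by apply: contraLR ep => eS; rewrite (disjointFr dp) // inE eS.
by rewrite eS; apply: contraLR eq => eS'; rewrite (disjointFr dq) // inE eS' eS.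
Qed.

Lemma covered_meets_kernel (x S' : M) : x \in covA -> S' \in KB -> t <= #|x :&: S'|.
Proof.
case/kernel_coveredP => _ [S SK Sx] S'K.
by apply: leq_trans (kernels_cross SK S'K) _; rewrite subset_leq_card ?setSI.
Qed.

Lemma card_le_bin_matching (x0 : M) : x0 \in B -> #|A| <= 'C(n, t) * odd_dfact (n - t.+1).
Proof.
move=> x0B; have [pm0 _ bx0] := pinB x0B.
apply: leq_trans (card_meeting pinA (subxx A) bx0 (fun a aA => crossAB aA x0B)) _.
by rewrite (pm_card pm0).
Qed.

Lemma card_le_kernel (S0 : M) : S0 \in KB -> #|A| <= 'C(L, t) * odd_dfact (n - t.+1) + rho.
Proof.
move=> S0K; have [ltS0L _ bS0] := kernelP pinB S0K.
apply: leq_trans (card_le_covered L pinA R_gt0) _; rewrite leq_add2r.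
apply: leq_trans (card_meeting pinA covA_sub bS0 (fun x xc => covered_meets_kernel xc S0K)) _.
by rewrite leq_mul2r leq_bin2l ?orbT // ltnW.
Qed.

Lemma card_le_core (T : M) : core t KA T -> #|A| <= odd_dfact (n - t.+1) + rho.
Proof.
case/(core_kernelsP pinA) => cT bT TK.
apply: leq_trans (card_le_covered L pinA R_gt0) _; rewrite leq_add2r -cT.
apply: (card_containing pinA covA_sub bT) => x /kernel_coveredP [_ [S SK Sx]].
exact: subset_trans (TK S SK) Sx.
Qed.

Lemma card_le_core_notsub (T Z : M) : core t KA T -> b \notin Z -> ~~ (T \subset Z) ->
  (forall x, x \in covA -> t <= #|x :&: Z|) -> #|A| <= #|Z| * odd_dfact (n - t.+2) + rho.
Proof.
case/(core_kernelsP pinA) => cT bT TK bZ TZ covZ.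
apply: leq_trans (card_le_covered L pinA R_gt0) _; rewrite leq_add2r.
apply: (card_extending pinA covA_sub cT bT bZ TZ) => x xc; split; last exact: covZ.
by have [_ [S SK Sx]] := kernel_coveredP xc; apply: subset_trans (TK S SK) Sx.
Qed.

Lemma card_le_core_notsub_matching (T x0 : M) : core t KA T -> x0 \in B -> ~~ (T \subset x0) ->
  #|A| <= n * odd_dfact (n - t.+2) + rho.
Proof.
move=> coreT x0B Tx0; have [pm0 _ bx0] := pinB x0B.
have covx0 x : x \in covA -> t <= #|x :&: x0| by case/kernel_coveredP => xA _; apply: crossAB.
by have := card_le_core_notsub coreT bx0 Tx0 covx0; rewrite (pm_card pm0).
Qed.

Lemma card_le_core_notsub_kernel (T S' : M) : core t KA T -> S' \in KB -> ~~ (T \subset S') ->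
  #|A| <= L * odd_dfact (n - t.+2) + rho.
Proof.
move=> coreT S'K TS'; have [ltS'L _ bS'] := kernelP pinB S'K.
apply: leq_trans (card_le_core_notsub coreT bS' TS' (fun x xc => covered_meets_kernel xc S'K)) _.
by rewrite leq_add2r leq_mul2r (ltnW ltS'L) orbT.
Qed.

Lemma card_le_no_core (S0 : M) : S0 \in KB -> (forall T, ~~ core t KB T) ->
  #|A| <= 'C(L, t) * (L * odd_dfact (n - t.+2)) + rho.
Proof.
move=> S0K nocore; have [ltS0L _ bS0] := kernelP pinB S0K.
pose g (T : M) := odflt set0 [pick S in KB | ~~ (T \subset S)].
have gP (T : M) : #|T| = t -> g T \in KB /\ ~~ (T \subset g T).
  rewrite /g => cT; case: pickP => [S /andP [SK TS] // | noS].
  by have [S SK TS] := not_core cT S0K (nocore T); have := noS S; rewrite SK TS.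
apply: leq_trans (card_le_covered L pinA R_gt0) _; rewrite leq_add2r.
apply: leq_trans (_ : #|[set T : M | T \subset S0 & #|T| == t]| * (L * odd_dfact (n - t.+2)) <= _).
  apply: (card_le_cover (G := fun T : M => [set x in covA | T \subset x & t <= #|x :&: g T|])).
    move=> x xc; have [_ [S SK Sx]] := kernel_coveredP xc.
    have [T TSS0 cT] := subset_of_card (kernels_cross SK S0K).
    have TS := subset_trans TSS0 (subsetIl _ _).
    exists T; first by rewrite inE cT eqxx (subset_trans TSS0 (subsetIr _ _)).
    by rewrite inE xc (subset_trans TS Sx) covered_meets_kernel ?(gP T cT).1.
  move=> T; rewrite inE => /andP [TS0 /eqP cT]; have [gK TgT] := gP T cT.
  have [ltgL _ bg] := kernelP pinB gK.
  apply: leq_trans (card_extending pinA _ cT _ bg TgT _) _.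
  - by rewrite setIdE (subset_trans (subsetIl _ _)).
  - by apply: contraNN bS0; apply: (subsetP TS0 b).
  - by move=> x; rewrite !inE => /and3P [].
  by rewrite leq_mul2r (ltnW ltgL) orbT.
by rewrite cards_draws leq_mul2r leq_bin2l ?orbT // ltnW.
Qed.

End TwoFamilies.
End Kernels.

Lemma mul_le_sq x y r f : 3 * (x * y) <= 2 * (f * f) -> 8 * (r * y) <= f * f ->
  8 * (r * x) <= f * f -> 8 * r <= f -> (x + r) * (y + r) <= f * f.
Proof. by move=> hxy hry hrx hr; have := leq_mul hr hr; nia. Qed.

Section CaseAnalysis.
Variables (n t L R : nat).
Local Notation Ft := (odd_dfact (n - t.+1)).
Local Notation F2 := (odd_dfact (n - t.+2)).
Local Notation rho := (odd_dfact (n - L.+1) * R ^ L).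
Hypotheses (ltnR : n < R) (ltLR : L < R) (leq_tL : t <= L).
Hypothesis rho_small : 8 * rho * ('C(L, t) + 'C(n, t)) <= Ft.
Hypothesis n_F2_small : 3 * n * F2 <= 2 * Ft.
Hypothesis bin_F2_small : 4 * 'C(L, t) ^ 2 * L * F2 <= Ft.

Let rho_le : 8 * rho <= Ft.
Proof. by apply: leq_trans rho_small; rewrite leq_pmulr // addn_gt0 bin_gt0 leq_tL. Qed.
Let R_gt0 : 0 < R. Proof. exact: leq_ltn_trans ltnR. Qed.

Lemma mul_le_no_kernel a x : a <= rho -> x <= 'C(n, t) * Ft -> a * x <= Ft * Ft.
Proof.
move=> ha hx; apply: leq_trans (leq_mul ha (leq_trans hx (leq_addr rho _))) _.
by rewrite -{1}[rho]add0n; apply: mul_le_sq; have := rho_le; nia.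
Qed.

Lemma mul_le_core a x : a <= n * F2 + rho -> x <= Ft + rho -> a * x <= Ft * Ft.
Proof.
move=> ha hx; apply: leq_trans (leq_mul ha hx) _.
by apply: mul_le_sq; have := rho_le; nia.
Qed.

Lemma mul_le_no_core a x : a <= 'C(L, t) * (L * F2) + rho -> x <= 'C(L, t) * Ft + rho ->
  a * x <= Ft * Ft.
Proof.
move=> ha hx; apply: leq_trans (leq_mul ha hx) _.
by apply: mul_le_sq; have := rho_le; nia.
Qed.

Lemma card_mul_le (A B : {set {set {set 'I_(2 * n)}}}) b c :
  pinned_pair t A B b c -> #|A| * #|B| <= Ft * Ft.
Proof.
move=> hAB; have hBA := pinned_pair_sym hAB; have [pinA pinB _] := hAB.
have [-> | [a0 a0A]] := set_0Vmem A; first by rewrite cards0.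
have [-> | [x0 x0B]] := set_0Vmem B; first by rewrite cards0 muln0.
have [KA0 | [SA SAK]] := set_0Vmem (kernels L R A b).
  exact: mul_le_no_kernel (card_le_no_kernel pinA R_gt0 KA0) (card_le_bin_matching hBA a0A).
have [KB0 | [SB SBK]] := set_0Vmem (kernels L R B c).
  rewrite mulnC.
  exact: mul_le_no_kernel (card_le_no_kernel pinB R_gt0 KB0) (card_le_bin_matching hAB x0B).
have [/existsP [T /andP [coreA coreB]] | nocore] :=
  boolP [exists T, core t (kernels L R A b) T && core t (kernels L R B c) T].
  have [/exists_inP [x xB Tx] | /exists_inPn allB] := boolP [exists x in B, ~~ (T \subset x)].
    exact: mul_le_core (card_le_core_notsub_matching hAB ltnR coreA xB Tx)
                       (card_le_core hBA ltnR coreB).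
  have [/exists_inP [a aA Ta] | /exists_inPn allA] := boolP [exists a in A, ~~ (T \subset a)].
    rewrite mulnC; exact: mul_le_core (card_le_core_notsub_matching hBA ltnR coreB aA Ta)
                                      (card_le_core hAB ltnR coreA).
  have [cT bT _] := core_kernelsP pinA coreA; have [_ cT' _] := core_kernelsP pinB coreB.
  rewrite -cT; apply: leq_mul.
  - by apply: (card_containing pinA (subxx A) bT) => a /allA; rewrite negbK.
  - by apply: (card_containing pinB (subxx B) cT') => x /allB; rewrite negbK.
have [/existsP [T coreA] | /existsPn nocoreA] := boolP [exists T, core t (kernels L R A b) T].
  have [cT _ _] := core_kernelsP pinA coreA.
  have /(not_core cT SBK) [S' S'K TS'] : ~~ core t (kernels L R B c) T.
    by apply: contra nocore => coreB; apply/existsP; exists T; apply/andP.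
  have hA := card_le_core_notsub_kernel hAB ltnR ltLR coreA S'K TS'.
  apply: (mul_le_no_core _ (card_le_kernel hBA ltnR ltLR SAK)).
  by apply: leq_trans hA _; rewrite leq_add2r leq_pmull // bin_gt0.
rewrite mulnC; exact: mul_le_no_core (card_le_no_core hBA ltnR ltLR SAK nocoreA)
                                  (card_le_kernel hAB ltnR ltLR SBK).
Qed.

End CaseAnalysis.

Lemma poly_le_exp2 a b c d x :
  d.+1 * (c * (a * d.+1 + b) ^ d) <= x -> c * (a * x + b) ^ d <= 2 ^ x.
Proof.
set D := d.+1; set Y := c * (a * D + b) ^ d => le_x; set z := x %/ D.
have le_Yz : Y <= z by rewrite /z leq_divRL // mulnC.
have lt_xz : x < z.+1 * D by rewrite /z ltn_ceil.
have exp_z : z.+1 ^ D <= 2 ^ x.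
  apply: leq_trans (_ : (2 ^ z) ^ D <= _); first by rewrite leq_exp2r // ltn_expl.
  by rewrite -expnM leq_exp2l // /z leq_divM.
apply: leq_trans exp_z.
have lin_x : a * x + b <= (a * D + b) * z.+1.
  rewrite mulnDl; apply: leq_add; last by rewrite leq_pmulr.
  by rewrite -mulnA leq_mul2l mulnC ltnW ?orbT.
apply: leq_trans (_ : c * ((a * D + b) * z.+1) ^ d <= _).
  by rewrite leq_mul2l leq_expn2r ?orbT.
by rewrite expnMn mulnA -/Y /D expnS leq_mul2r (leq_trans le_Yz) ?orbT.
Qed.

(* L - t = 2m with 2^m = 16 * 2^(2t(log n + 2)) >= 16 (n+1)^(2t), which makes the
   remainder negligible (rho_small), while L^(2t+1) = o(n). *)
Definition kernel_size t n := 4 * t * trunc_log 2 n + 9 * t + 8.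

Lemma kernel_size_eventually_small t :
  exists n0, forall n, n0 <= n -> 8 * kernel_size t n ^ (2 * t + 1) <= n.
Proof.
set d := 2 * t + 1; exists (2 ^ (d.+1 * (8 * (4 * t * d.+1 + (9 * t + 8)) ^ d))) => n le_n0n.
have n_gt0 : 0 < n by apply: leq_trans le_n0n; rewrite expn_gt0.
apply: leq_trans (trunc_logP (isT : 1 < 2) n_gt0).
by rewrite /kernel_size -addnA; apply/poly_le_exp2/trunc_log_max.
Qed.

Lemma leq_kernel_size t n : 9 * t + 8 <= kernel_size t n.
Proof. by rewrite /kernel_size -addnA leq_addl. Qed.

Lemma sq_succn_le_exp2 n : n.+1 * n.+1 <= 2 ^ (2 * trunc_log 2 n + 4).
Proof.
have le_n : n.+1 <= 4 * 2 ^ trunc_log 2 n.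
  by have := trunc_log_ltn n (isT : 1 < 2); rewrite expnS; lia.
apply: leq_trans (leq_mul le_n le_n) _.
by rewrite mulnACA -expnD addnn -mul2n (expnD 2 _ 4) mulnC.
Qed.

Section Asymptotics.
Variables t n : nat.
Local Notation l := (trunc_log 2 n).
Local Notation L := (kernel_size t n).
Hypothesis L_small : 8 * L ^ (2 * t + 1) <= n.

Lemma kernel_size_small : 8 * L <= n.
Proof.
apply: leq_trans L_small; rewrite leq_mul2l /= -{1}(expn1 L).
by apply: leq_pexp2l; [have := leq_kernel_size t n | ]; lia.
Qed.

Lemma odd_dfact_t1 : odd_dfact (n - t.+1) = odd_dfact (n - t.+2) * (2 * (n - t.+2) + 1).
Proof.
have := leq_kernel_size t n; have := kernel_size_small => hL hL'.
have -> : n - t.+1 = (n - t.+2).+1 by lia.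
exact: odd_dfactS.
Qed.

Lemma n_F2_small : 3 * n * odd_dfact (n - t.+2) <= 2 * odd_dfact (n - t.+1).
Proof.
have := leq_kernel_size t n; have := kernel_size_small => hL hL'.
rewrite odd_dfact_t1; have le_n : 3 * n <= 2 * (2 * (n - t.+2) + 1) by lia.
by have := leq_mul le_n (leqnn (odd_dfact (n - t.+2))); lia.
Qed.

Lemma bin_F2_small : 4 * 'C(L, t) ^ 2 * L * odd_dfact (n - t.+2) <= odd_dfact (n - t.+1).
Proof.
have := leq_kernel_size t n; have := kernel_size_small => hL hL'.
rewrite odd_dfact_t1 [X in _ <= X]mulnC leq_mul2r; apply/orP; right.
apply: leq_trans (_ : 4 * L ^ (2 * t + 1) <= _); last lia.
rewrite -mulnA leq_mul2l /= addn1 (expnSr L) (mulnC 2 t) expnM leq_mul2r.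
by rewrite leq_expn2r ?leq_bin_exp ?orbT.
Qed.

Lemma rho_small :
  8 * (odd_dfact (n - L.+1) * n.+1 ^ L) * ('C(L, t) + 'C(n, t)) <= odd_dfact (n - t.+1).
Proof.
have := leq_kernel_size t n; have := kernel_size_small => hL hL'.
set a := n - L.+1; set m := 2 * t * l + 4 * t + 4; set R := n.+1.
have eL : L = t + 2 * m by rewrite /kernel_size /m; lia.
have -> : n - t.+1 = a + 2 * m by rewrite /a; lia.
apply: leq_trans (odd_dfact_addn a (2 * m)); set K := 'C(L, t) + 'C(n, t).
have -> : 8 * (odd_dfact a * R ^ L) * K = R ^ L * (8 * K) * odd_dfact a by lia.
rewrite leq_mul2r; apply/orP; right.
have le_R : 2 * (R * R) <= (2 * a + 1) ^ 2.
  have le_3R : 3 * R <= 2 * (2 * a + 1) by rewrite /R /a; lia.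
  by have := leq_mul le_3R le_3R; rewrite mulnACA (mulnACA 2) expnS expn1; lia.
have le_K : K <= 2 * R ^ t.
  have := leq_bin_exp L t; have := leq_bin_exp n t.
  have LR : L <= R by rewrite /R; lia.
  have := @leq_expn2r n R t (leqnSn n); have := @leq_expn2r L R t LR.
  rewrite /K; lia.
have le_Rt : R ^ t * R ^ t <= 2 ^ (4 * t + 2 * t * l).
  rewrite -expnMn; apply: leq_trans (leq_expn2r t (sq_succn_le_exp2 n)) _.
  by rewrite -expnM leq_exp2l //; lia.
have e16 : 16 * 2 ^ (4 * t + 2 * t * l) = 2 ^ m.
  by rewrite /m -(expnD 2 4); congr (2 ^ _); lia.
apply: leq_trans (_ : 16 * (R * R) ^ m * 2 ^ (4 * t + 2 * t * l) <= _); last first.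
  by rewrite mulnAC e16 -expnMn expnM leq_expn2r.
rewrite eL expnD expnM; set x := R ^ t; set y := (R * R) ^ m.
apply: leq_trans (_ : x * y * (16 * x) <= _); first by rewrite leq_mul2l orbC; lia.
by have := leq_mul (leqnn (16 * y)) le_Rt; lia.
Qed.

End Asymptotics.

Theorem mainTheorem20 :
  forall t : nat, exists n0 : nat, forall n : nat, n0 <= n ->
  forall F : {set {set {set 'I_(2 * n)}}},
    (forall m, m \in F -> perfect_matching m) ->
    t_intersecting t F ->
    forall i j k : 'I_(2 * n), i != j -> i != k -> j != k ->
      #|restrict_edge F i j| * #|restrict_edge F i k| <= (odd_dfact (n - t - 1)) ^ 2.
Proof.
move=> t; have [n0 n0P] := kernel_size_eventually_small t.
exists n0 => n le_n0n F pmF tF i j k ij ik jk; have L_small := n0P n le_n0n.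
have ltLn : kernel_size t n < n.+1 by have := kernel_size_small L_small; lia.
have letL : t <= kernel_size t n by have := leq_kernel_size t n; lia.
rewrite -subnDA addn1 -mulnn.
apply: (card_mul_le (ltnSn n) ltLn letL (rho_small L_small)).
- exact: n_F2_small.
- exact: bin_F2_small.
exact: restrict_edge_pinned_pair.
Qed.
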